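(* Let $q$ be an odd prime power, $n\ge 2$, and if $n=2$ assume $q\equiv 1\pmod 4$. Let $M=(m_{ij})$ be an $n\times n$ matrix with entries in $\mathbb{F}_q$ such that $m_{ij}+m_{ji}=0$ for all $i\neq j$, $m_{11}\neq m_{22}$, and $m_{ii}=m_{22}$ for all $i>2$. Then $\sharp(\mathrm{Num}_0(M)_q)=(q+1)/2$ and $\mathrm{Num}_0(M)_q\setminus\{0\}$ is the set of all $a\in\mathbb{F}_q^*$ such that $-a/(m_{22}-m_{11})$ is a square in $\mathbb{F}_q$. Moreover $0\in\mathrm{Num}'_0(M)_q$ if and only if either $n\ge 4$, or $n=3$ and $q\equiv 1\pmod 4$.
   Context: The Hermitian form is $\langle u,v\rangle=\sum_i u_i^qv_i$; for $u=(x_1,\dots,x_n)\in\mathbb{F}_q^n$ and $M=(m_{ij})$ over $\mathbb{F}_q$, $\langle u,u\rangle=\sum x_i^2$ and $\langle u,Mu\rangle=\sum_{i,j}m_{ij}x_ix_j$. $\mathrm{Num}_0(M)_q=\{\langle u,Mu\rangle: u\in\mathbb{F}_q^n,\ \langle u,u\rangle=0\}$ and $\mathrm{Num}'_0(M)_q=\{\langle u,Mu\rangle: u\in\mathbb{F}_q^n\setminus\{0\},\ \langle u,u\rangle=0\}$. *)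

From HB Require Import structures.
From mathcomp Require Import all_boot all_order all_algebra all_field.
Set Implicit Arguments. Unset Strict Implicit. Unset Printing Implicit Defensive.
Import GRing.Theory.
Local Open Scope ring_scope.

Definition hform (F : finFieldType) (n : nat) (u v : 'cV[F]_n) : F :=
  \sum_i (u i 0) ^+ #|F| * v i 0.

Definition Num0 (F : finFieldType) (n : nat) (M : 'M[F]_n) : {set F} :=
  [set hform u (M *m u) | u in [set u : 'cV[F]_n | hform u u == 0]].

Definition Num0' (F : finFieldType) (n : nat) (M : 'M[F]_n) : {set F} :=
  [set hform u (M *m u) | u in [set u : 'cV[F]_n | (u != 0) && (hform u u == 0)]].

(* Over F_q the Hermitian form is the bilinear form sum_i u_i v_i, and the
   alternating off-diagonal part of M contributes nothing to <u, Mu>, so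
   <u, Mu> = m11 x1^2 + m22 (x2^2 + ... + xn^2).  On the cone sum_i x_i^2 = 0
   this is (m11 - m22) x1^2, and every -x1^2 is a sum of n - 1 squares (of two
   squares when n >= 3, of one when n = 2 because -1 is then a square), so
   Num_0(M) is (m11 - m22) times the (q + 1)/2 squares of F_q.  The value 0 is
   taken at a nonzero isotropic u exactly when u = (0, v) with v a nonzero
   isotropic vector of F_q^(n-1); such a v exists iff n - 1 >= 3 (write
   -1 = x^2 + y^2 and take v = (x, y, 1, 0, ...)), or n - 1 = 2 and -1 is a
   square, i.e. q = 1 mod 4. *)

From mathcomp Require Import all_boot all_order all_algebra all_field.
From mathcomp Require Import all_fingroup cyclic.
From mathcomp Require Import zify ring.
Set Implicit Arguments.
Unset Strict Implicit.
Unset Printing Implicit Defensive.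

Import GRing.Theory FinRing.Theory.
Local Open Scope ring_scope.

Lemma natr_card_finNzRing (R : finNzRingType) : #|R|%:R = 0 :> R.
Proof. by rewrite -zmodXgE -cardsT expg_cardG ?inE. Qed.

Lemma modn4_eq1_half (q : nat) : odd q -> (q %% 4 == 1)%N = ~~ odd q./2.
Proof.
move=> oq; rewrite -[in LHS](odd_double_half q) oq -[in LHS](odd_double_half q./2).
by case: (odd q./2) => /=; lia.
Qed.

Section FiniteFieldSquares.

Variable F : finFieldType.

Definition squares : {set F} := [set x ^+ 2 | x : F].

Lemma mem_scale_squares (c a : F) : c != 0 ->
  (a \in [set c * s | s in squares]) = [exists b, a / c == b ^+ 2].
Proof.
move=> c0; apply/imsetP/existsP => [[_ /imsetP[b _ ->] ->]|[b /eqP ac]].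
  by exists b; rewrite mulrC mulKf.
by exists (b ^+ 2); [exact: imset_f | rewrite -ac mulrC divfK].
Qed.

Lemma expf_card_pred [x : F] : x != 0 -> x ^+ #|F|.-1 = 1.
Proof.
move=> x0; apply: (mulfI x0); rewrite mulr1 -exprS.
by rewrite (ltn_predK (finNzRing_gt1 F)) expf_card.
Qed.

Hypothesis oddF : odd #|F|.

Lemma two_neq0 : (2 : F) != 0.
Proof.
apply/eqP=> two0; have := natr_card_finNzRing F.
rewrite -(odd_double_half #|F|) oddF natrD -muln2 natrM two0 mulr0 addr0.
by move/eqP; rewrite oner_eq0.
Qed.

Lemma card_squares : #|squares| = (#|F|.+1 %/ 2)%N.
Proof.
have fiber s : s \in squares -> (\sum_(x : F | x ^+ 2 == s) 1 = (s != 0%R).+1)%N.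
  case/imsetP=> t _ ->; rewrite (eq_bigl (mem (pred2 t (- t)))); last first.
    by move=> x; rewrite eqf_sqr.
  rewrite sum1_card card2 sqrf_eq0 -addr_eq0 -mulr2n -mulr_natl mulf_eq0.
  by rewrite (negbTE two_neq0).
have sq0 : (0 : F) \in squares by apply/imsetP; exists 0; rewrite ?expr0n.
have : #|F| = (\sum_(s in squares) (s != 0%R).+1)%N.
  rewrite -sum1_card (partition_big (fun x : F => x ^+ 2) (mem squares)) /=.
    by apply: eq_bigr => s /fiber <-.
  by move=> x _; apply: imset_f.
rewrite (big_setD1 0) //= eqxx => ->.
rewrite (eq_bigr (fun=> 2%N)) => [|s]; last by rewrite in_setD1 => /andP[->].
rewrite sum_nat_const (cardsD1 0 squares) sq0 /=.
by rewrite -addSn -mulSn mulnK // add1n.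
Qed.

Lemma sum_of_two_squares (a : F) : exists x y : F, x ^+ 2 + y ^+ 2 = a.
Proof.
(* The squares and [a] minus the squares each fill more than half of F. *)
pose T := [set a - s | s in squares].
have cardT : #|T| = #|squares| by apply: card_imset => s t /addrI /oppr_inj.
have : squares :&: T != set0.
  apply: contraTneq (max_card (mem (squares :|: T))) => sqT0.
  rewrite -ltnNge cardsU sqT0 cards0 subn0 cardT addnn card_squares -muln2.
  by rewrite divnK // dvdn2 /= oddF.
case/set0Pn => _ /setIP[/imsetP[x _ ->] /imsetP[_ /imsetP[y _ ->] xy]].
by exists x, y; rewrite xy subrK.
Qed.

Lemma card_pred_half : #|F|.-1 = (#|F|./2).*2.
Proof. by rewrite -[in LHS](odd_double_half #|F|) oddF. Qed.

Lemma exists_expr_half_eqN1 : exists x : F, x ^+ #|F|./2 = -1.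
Proof.
(* X^h - 1 has at most h roots, whereas all 2h nonzero x satisfy (x^h)^2 = 1. *)
set h := #|F|./2.
have h_gt0 : (0 < h)%N.
  by have := finNzRing_gt1 F; rewrite -(odd_double_half #|F|) oddF; lia.
have /allPn[x] : ~~ all (root ('X^h - 1)) (enum (predC1 (0 : F))).
  apply/negP => /max_poly_roots; rewrite -size_poly_eq0 size_XnsubC //.
  rewrite -cardE cardC1 card_pred_half enum_uniq => /(_ isT isT); lia.
rewrite mem_enum /= rootE !hornerE subr_eq0 => x0 xh1; exists x.
have : (x ^+ h) ^+ 2 == 1 by rewrite -exprM muln2 -card_pred_half expf_card_pred.
by rewrite sqrf_eq1 (negbTE xh1) => /eqP.
Qed.

Lemma sqrtN1P : (exists i : F, i ^+ 2 = -1) <-> (#|F| %% 4 = 1)%N.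
Proof.
split=> [[i i2] | /eqP]; [apply/eqP|]; rewrite (modn4_eq1_half oddF).
  have i0 : i != 0 by rewrite -sqrf_eq0 i2 oppr_eq0 oner_eq0.
  have := expf_card_pred i0; rewrite card_pred_half -muln2 mulnC exprM i2 -signr_odd.
  case: (odd _) => //; rewrite expr1 => /eqP; rewrite eq_sym -addr_eq0 -mulr2n.
  by rewrite (negbTE two_neq0).
move=> h_even; have [x xh] := exists_expr_half_eqN1; exists (x ^+ (#|F|./2)./2).
rewrite -exprM muln2 -[RHS]xh -[in RHS](odd_double_half #|F|./2).
by rewrite (negbTE h_even).
Qed.

End FiniteFieldSquares.

Section ColumnVectors.

Variable F : finFieldType.

Definition sqnorm m (v : 'cV[F]_m) : F := \sum_i v i 0 ^+ 2.

Lemma hformE m (u v : 'cV[F]_m) : hform u v = \sum_i u i 0 * v i 0.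
Proof. by apply: eq_bigr => i _; rewrite expf_card. Qed.

Lemma hform_sqnorm m (u : 'cV[F]_m) : hform u u = sqnorm u.
Proof. by rewrite hformE; apply: eq_bigr => i _; rewrite expr2. Qed.

Lemma sqnorm_recl m (v : 'cV[F]_m.+1) :
  sqnorm v = v ord0 0 ^+ 2 + sqnorm (row' ord0 v).
Proof.
by rewrite /sqnorm big_ord_recl; congr (_ + _); apply: eq_bigr => i _; rewrite mxE.
Qed.

Lemma sqnorm_col_seq m (s : seq F) :
  (size s <= m)%N -> sqnorm (\col_(j < m) s`_j) = \sum_(x <- s) x ^+ 2.
Proof.
move=> sm; rewrite /sqnorm (eq_bigr (fun j : 'I_m => s`_j ^+ 2)); last first.
  by move=> j _; rewrite mxE.
rewrite -(big_mkord xpredT (fun j => s`_j ^+ 2)) (big_cat_nat (leq0n _) sm) /=.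
rewrite [X in _ + X]big1_seq ?addr0 -?(big_nth 0 xpredT (fun x => x ^+ 2)) //.
move=> j /andP[_]; rewrite mem_index_iota => /andP[sj _].
by rewrite nth_default ?expr0n.
Qed.

Lemma col_seq_neq0 m (s : seq F) j :
  (j < m)%N -> s`_j != 0 -> \col_(i < m) s`_i != 0.
Proof.
move=> jm; apply: contraNneq => /matrixP/(_ (Ordinal jm) 0).
by rewrite !mxE /= => ->.
Qed.

Definition col_cons m (a : F) (v : 'cV[F]_m) : 'cV[F]_m.+1 :=
  \col_i oapp (v^~ 0) a (unlift ord0 i).

Lemma col_cons_ord0 m a (v : 'cV[F]_m) : col_cons a v ord0 0 = a.
Proof. by rewrite mxE unlift_none. Qed.

Lemma row'_col_cons m a (v : 'cV[F]_m) : row' ord0 (col_cons a v) = v.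
Proof. by apply/matrixP => i j; rewrite !mxE liftK ord1. Qed.

Lemma col_consK m (v : 'cV[F]_m.+1) : col_cons (v ord0 0) (row' ord0 v) = v.
Proof.
apply/matrixP => i j; rewrite ord1 mxE.
by case: unliftP => [k ->|->] //=; rewrite mxE.
Qed.

Lemma col_cons_eq0 m a (v : 'cV[F]_m) : (col_cons a v == 0) = (a == 0) && (v == 0).
Proof.
apply/eqP/andP => [v0 | [/eqP-> /eqP->]].
  split; apply/eqP; first by rewrite -(col_cons_ord0 a v) v0 mxE.
  by rewrite -(row'_col_cons a v) v0; apply/matrixP => i j; rewrite !mxE.
by apply/matrixP => i j; rewrite !mxE; case: unlift => [k|] //=; rewrite mxE.
Qed.

Lemma sqnorm_col_cons m a (v : 'cV[F]_m) : sqnorm (col_cons a v) = a ^+ 2 + sqnorm v.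
Proof. by rewrite sqnorm_recl col_cons_ord0 row'_col_cons. Qed.

End ColumnVectors.

Section SumsOfSquares.

Variable F : finFieldType.
Hypothesis oddF : odd #|F|.

Lemma hform_mulmx_skew m (M : 'M[F]_m) (u : 'cV[F]_m) :
  (forall i j, i != j -> M i j + M j i = 0) ->
  hform u (M *m u) = \sum_i M i i * u i 0 ^+ 2.
Proof.
move=> M_skew; rewrite hformE.
have -> : \sum_i u i 0 * (M *m u) i 0 = \sum_i \sum_j M i j * (u i 0 * u j 0).
  by apply: eq_bigr => i _; rewrite mxE mulr_sumr; apply: eq_bigr => j _; ring.
apply: (mulfI (two_neq0 oddF)); rewrite mulr_natl mulr2n {2}exchange_big -big_split.
rewrite mulr_sumr; apply: eq_bigr => i _ /=; rewrite -big_split (bigD1 i) //=.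
rewrite big1 => [|j ji]; last first.
  by rewrite [u j 0 * _]mulrC -mulrDl M_skew ?mul0r // eq_sym.
by rewrite addr0; ring.
Qed.

Lemma sqnorm_eq_Nsqr m (a : F) : (0 < m)%N -> (m = 1 -> #|F| %% 4 = 1)%N ->
  exists v : 'cV[F]_m, sqnorm v = - a ^+ 2.
Proof.
case: m => [//|[|m]] _ m1_q4.
  have [i i2] := (sqrtN1P oddF).2 (m1_q4 erefl).
  exists (\col_(j < 1) [:: a * i]`_j).
  by rewrite sqnorm_col_seq // big_seq1 exprMn i2 mulrN1.
have [x [y xy]] := sum_of_two_squares oddF (- a ^+ 2).
exists (\col_(j < m.+2) [:: x; y]`_j).
by rewrite sqnorm_col_seq // !big_cons big_nil addr0.
Qed.

Lemma isotropic_neq0P m :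
  (exists2 v : 'cV[F]_m, v != 0 & sqnorm v = 0) <->
  (3 <= m)%N \/ (m = 2 /\ #|F| %% 4 = 1)%N.
Proof.
split=> [[v] | [m3 | [-> q4]]].
- case: m v => [|[|[|m]]] v; [by rewrite flatmx0 eqxx | | | by left].
  + rewrite -[v]col_consK col_cons_eq0 sqnorm_col_cons flatmx0 eqxx andbT.
    by rewrite /sqnorm big_ord0 addr0 => /negbTE x0 /eqP; rewrite sqrf_eq0 x0.
  + rewrite -[v]col_consK -[row' _ v]col_consK !col_cons_eq0 !sqnorm_col_cons.
    rewrite flatmx0 eqxx andbT /sqnorm big_ord0 addr0.
    set x := v ord0 0; set y := row' ord0 v ord0 0.
    move=> nz /eqP; rewrite addrC addr_eq0 => /eqP y2.
    have x0 : x != 0.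
      apply: contraNneq nz => x0; rewrite x0 eqxx /= -sqrf_eq0 y2 x0.
      by rewrite expr2 mul0r oppr0.
    right; split=> //; apply/(sqrtN1P oddF); exists (y / x).
    by rewrite expr_div_n y2 mulNr divff // sqrf_eq0.
- have [x [y xy]] := sum_of_two_squares oddF (-1).
  exists (\col_(j < m) [:: x; y; 1]`_j).
    by apply: (@col_seq_neq0 _ _ _ 2); rewrite //= oner_neq0.
  by rewrite sqnorm_col_seq // !big_cons big_nil addr0 addrA xy expr1n addNr.
- have [i i2] := (sqrtN1P oddF).2 q4.
  exists (\col_(j < 2) [:: 1; i]`_j).
    by apply: (@col_seq_neq0 _ _ _ 0); rewrite //= oner_neq0.
  by rewrite sqnorm_col_seq // !big_cons big_nil i2 expr1n addr0 addrN.
Qed.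

End SumsOfSquares.

Section SkewSymmetricMatrix.

Variables (F : finFieldType) (n : nat) (M : 'M[F]_n.+2).
Hypothesis oddF : odd #|F|.
Hypothesis M_skew : forall i j : 'I_n.+2, i != j -> M i j + M j i = 0.
Hypothesis M_diag : forall i : 'I_n.+2, (2 < i.+1)%N -> M i i = M 1 1.

Lemma M_diag_lift0 i : M (lift ord0 i) (lift ord0 i) = M 1 1.
Proof.
case: (unliftP ord0 i) => [k ->|->]; first exact: M_diag.
by congr (M _ _); apply: val_inj.
Qed.

Lemma hform_mulmx_isotropic u : hform u u = 0 ->
  hform u (M *m u) = (M ord0 ord0 - M 1 1) * u ord0 0 ^+ 2.
Proof.
rewrite hform_sqnorm sqnorm_recl (hform_mulmx_skew oddF _ M_skew) big_ord_recl.
have -> : \sum_(i < n.+1) M (lift ord0 i) (lift ord0 i) * u (lift ord0 i) 0 ^+ 2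
          = M 1 1 * sqnorm (row' ord0 u).
  by rewrite /sqnorm mulr_sumr; apply: eq_bigr => i _; rewrite M_diag_lift0 mxE.
by move/eqP; rewrite addrC addr_eq0 => /eqP->; ring.
Qed.

Lemma Num0E : (n = 0 -> #|F| %% 4 = 1)%N ->
  Num0 M = [set (M ord0 ord0 - M 1 1) * s | s in squares F].
Proof.
move=> n0_q4; apply/setP => a; apply/imsetP/imsetP => [[u] | [_ /imsetP[x _ ->] ->]].
  rewrite inE => /eqP iso ->; exists (u ord0 0 ^+ 2); first exact: imset_f.
  exact: hform_mulmx_isotropic.
have [v v_sq] := sqnorm_eq_Nsqr oddF x (ltn0Sn n) (fun n1 => n0_q4 (succn_inj n1)).
have iso : hform (col_cons x v) (col_cons x v) = 0.
  by rewrite hform_sqnorm sqnorm_col_cons v_sq addrN.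
exists (col_cons x v); first by rewrite inE iso.
by rewrite hform_mulmx_isotropic // col_cons_ord0.
Qed.

Lemma mem0_Num0' : M ord0 ord0 != M 1 1 ->
  0 \in Num0' M <-> exists2 v : 'cV[F]_n.+1, v != 0 & sqnorm v = 0.
Proof.
rewrite -subr_eq0 => c0; split=> [/imsetP[u] | [v v0 v_iso]].
  rewrite inE => /andP[u0 /eqP iso]; rewrite hform_mulmx_isotropic // => /esym/eqP.
  rewrite mulf_eq0 (negbTE c0) sqrf_eq0 /= => /eqP u00.
  exists (row' ord0 u).
    by move: u0; rewrite -{1}[u]col_consK col_cons_eq0 u00 eqxx.
  by move: iso; rewrite hform_sqnorm sqnorm_recl u00 expr0n add0r.
have iso : hform (col_cons 0 v) (col_cons 0 v) = 0.
  by rewrite hform_sqnorm sqnorm_col_cons v_iso expr0n addr0.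
apply/imsetP; exists (col_cons 0 v).
  by rewrite inE col_cons_eq0 (negbTE v0) andbF iso eqxx.
by rewrite hform_mulmx_isotropic // col_cons_ord0 expr0n mulr0.
Qed.

End SkewSymmetricMatrix.

Theorem proposition9 (F : finFieldType) (n : nat) (M : 'M[F]_n.+2) :
  odd #|F| ->
  (n = 0%N -> #|F| %% 4 = 1)%N ->
  (forall i j : 'I_n.+2, i != j -> M i j + M j i = 0) ->
  M ord0 ord0 != M 1 1 ->
  (forall i : 'I_n.+2, (2 < i.+1)%N -> M i i = M 1 1) ->
  #|Num0 M| = (#|F|.+1 %/ 2)%N
  /\ Num0 M :\ 0 = [set a : F | (a != 0) &&
                     [exists b : F, - a / (M 1 1 - M ord0 ord0) == b ^+ 2]]
  /\ (0 \in Num0' M <-> (4 <= n.+2)%N \/ (n.+2 = 3%N /\ #|F| %% 4 = 1)%N).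
Proof.
move=> oddF n0_q4 M_skew M_neq M_diag.
have c0 : M ord0 ord0 - M 1 1 != 0 by rewrite subr_eq0.
have Num0M := Num0E oddF M_skew M_diag n0_q4.
split; [|split].
- by rewrite Num0M card_imset ?card_squares //; apply: mulfI.
- apply/setP => a; rewrite !inE Num0M mem_scale_squares //.
  by rewrite -[M 1 1 - _]opprB invrN mulrNN.
- apply: iff_trans (mem0_Num0' oddF M_skew M_diag M_neq) _.
  apply: iff_trans (isotropic_neq0P oddF n.+1) _.
  by split=> -[le | [eq q4]]; [left | right | left | right]; lia.
Qed.
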